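(* Let $H_\alpha(k)=-\Delta_\alpha(k)+V$, $k\in\mathbb T^d$, be the fiber magnetic Schrödinger operator on the fundamental graph $\mathcal G_*=(\mathcal V_*,\mathcal A_* )$ and put $v_x=V_x-\varkappa_x$, $\phi(\mathbf c,k)=\alpha(\mathbf c)+\langle\tau(\mathbf c),k\rangle$. Then $$\operatorname{Tr}H_\alpha(k)=\sum_{x\in\mathcal V_*}v_x+\sum_{\mathbf c\in\mathcal C_1}\cos\phi(\mathbf c,k),$$ $$\operatorname{Tr}H_\alpha^2(k)=\sum_{x\in\mathcal V_*}v_x^2+2\sum_{\mathbf c\in\mathcal C_1}v_{x_{\mathbf c}}\cos\phi(\mathbf c,k)+\sum_{\mathbf c\in\mathcal C_2}\cos\phi(\mathbf c,k),$$ $$\frac1{(2\pi)^d}\int_{\mathbb T^d}\operatorname{Tr}H_\alpha(k)dk=\sum_{x\in\mathcal V_*}v_x+\sum_{\mathbf c\in\mathcal C_1^0}\cos\alpha(\mathbf c),$$ $$\frac1{(2\pi)^d}\int_{\mathbb T^d}\operatorname{Tr}H_\alpha^2(k)dk=\sum_{x\in\mathcal V_*}v_x^2+2\sum_{\mathbf c\in\mathcal C_1^0}v_{x_{\mathbf c}}\cos\alpha(\mathbf c)+\sum_{\mathbf c\in\mathcal C_2^0}\cos\alpha(\mathbf c),$$ where $x_{\mathbf c}$ is the unique vertex of the cycle $\mathbf c\in\mathcal C_1$. If there are no loops in $\mathcal G_*$, then $\operatorname{Tr}H_\alpha(k)=\frac1{(2\pi)^d}\int_{\mathbb T^d}\operatorname{Tr}H_\alpha(k)dk=\sum_{x\in\mathcal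 V_*}v_x$, and if in addition there are no multiple edges in $\mathcal G_*$, then $$\operatorname{Tr}H_\alpha^2(k)=\frac1{(2\pi)^d}\int_{\mathbb T^d}\operatorname{Tr}H_\alpha^2(k)dk=\#\mathcal A_*+\sum_{x\in\mathcal V_*}v_x^2 .$$
   Context: Let $\Gamma\subset\mathbb R^d$ be a lattice with basis $\mathfrak a_1,\dots,\mathfrak a_d$ and fundamental cell $\Omega=\{\sum_sx_s\mathfrak a_s:(x_s)\in[0,1)^d\}$. Let $\mathcal G=(\mathcal V,\mathcal E)$ be a connected, locally finite, infinite graph embedded in $\mathbb R^d$ (loops and multiple edges allowed), invariant under translations by $\Gamma$, with finite quotient $\mathcal G_*=\mathcal G/\Gamma=(\mathcal V_*,\mathcal E_* )$; $\nu=\#\mathcal V_*$. Each unoriented edge gives two oriented edges; $\mathcal A,\mathcal A_*$ are the oriented edge sets (so $\#\mathcal A_*=\sum_x\varkappa_x$); $\underline{\mathbf e}$ is the inverse; $\varkappa_x$ is the number of oriented edges starting at $x$ (loops counted twice). Edge index: $x=x_0+[x]$ with $x_0\in\mathcal V\cap\Omega$, $[x]\in\Gamma$ with coordinates $[x]_{\mathbb A}\in\mathbb Z^d$; $\tau((x,y))=[y]_{\mathbb A}-[x]_{\mathbb A}$, defined on $\mathcal A_*$ by $\Gamma$-invariance. Periodic magnetic potential $\alpha:\mathcal A\to\mathbb R$ with $\alpha(\underline{\mathbf e})=-\alpha(\mathbf e)$, $\Gamma$-invariant; $V$ a real $\Gamma$-periodic function on $\mathcal V$ (viewed on $\mathcal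 V_*$). For $k\in\mathbb T^d=\mathbb R^d/(2\pi\mathbb Z)^d$: $H_\alpha(k)=A_\alpha(k)-\varkappa+V$ on $\mathbb C^\nu$, $(A_\alpha(k)f)_x=\sum_{\mathbf e=(x,y)\in\mathcal A_*}e^{i(\alpha(\mathbf e)+\langle\tau(\mathbf e),k\rangle)}f_y$, $(\varkappa f)_x=\varkappa_xf_x$, $(Vf)_x=V_xf_x$. Cycles in $\mathcal G_*$: ordered sequences of oriented edges $(\mathbf e_1,\dots,\mathbf e_n)$, $\mathbf e_s=(x_{s-1},x_s)$, $x_n=x_0$ (distinct cyclic shifts distinct, backtracking allowed); index $\tau(\mathbf c)=\sum\tau(\mathbf e)$; flux $\alpha(\mathbf c)=(\sum\alpha(\mathbf e))\bmod2\pi$. $\mathcal C_n$ = cycles of length $n$; $\mathcal C_n^0$ = those with zero index. In particular $\mathcal C_1$ consists of the oriented loops of $\mathcal G_*$. *)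

From HB Require Import structures.
From mathcomp Require Import all_boot all_order all_algebra.
From mathcomp Require Import all_classical all_reals all_analysis.
From mathcomp Require Export complex.
Export Order.TTheory GRing.Theory Num.Theory.

Set Implicit Arguments.
Unset Strict Implicit.
Unset Printing Implicit Defensive.

Local Open Scope ring_scope.

(* Data of the fundamental graph G_* = (V_*, A_* ):
   vertices V_* = 'I_nu, oriented edges = a finType A, with source/target maps
   src, tgt : A -> 'I_nu, edge index tau : A -> Z^d (as 'I_d -> int),
   magnetic potential alpha : A -> R, potential Vp : 'I_nu -> R. *)

Section FiberOperator.
Variables (R : realType) (d nu : nat) (A : finType).
Variables (src tgt : A -> 'I_nu) (tau : A -> 'I_d -> int) (alpha : A -> R)
          (Vp : 'I_nu -> R).

Definition expi (theta : R) : R[i] := (cos theta +i* sin theta)%C.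

Definition ip (t : 'I_d -> int) (k : 'I_d -> R) : R := \sum_(j < d) (t j)%:~R * k j.

(* kappa_x = number of oriented edges starting at x (loops counted twice,
   since a loop contributes two oriented edges e and its inverse) *)
Definition kappa (x : 'I_nu) : nat := #|[set e : A | src e == x]|.

Definition vpot (x : 'I_nu) : R := Vp x - (kappa x)%:R.

Definition Amat (k : 'I_d -> R) : 'M[R[i]]_nu :=
  \matrix_(x, y) \sum_(e : A | (src e == x) && (tgt e == y))
                    expi (alpha e + ip (tau e) k).

Definition Hmat (k : 'I_d -> R) : 'M[R[i]]_nu :=
  Amat k - \matrix_(x, y) ((x == y)%:R * ((kappa x)%:R)%:C%C)
         + \matrix_(x, y) ((x == y)%:R * (Vp x)%:C%C).

(* cycles of length n: ordered sequences (e_1,...,e_n) with tgt e_s = src e_{s+1}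
   and tgt e_n = src e_1 (cyclic shifts are distinct, backtracking allowed) *)
Definition is_cycle (n : nat) (c : n.-tuple A) : bool :=
  [forall i : 'I_n, tgt (tnth c i) == src (tnth c (ordS i))].

Definition cyc_index (n : nat) (c : n.-tuple A) : 'I_d -> int :=
  fun j => \sum_(i < n) tau (tnth c i) j.

(* flux alpha(c) = sum of alpha(e) (only used through cos, so no reduction mod 2 pi) *)
Definition cyc_flux (n : nat) (c : n.-tuple A) : R := \sum_(i < n) alpha (tnth c i).

Definition is_cycle0 (n : nat) (c : n.-tuple A) : bool :=
  is_cycle c && [forall j : 'I_d, cyc_index c j == 0].

Definition phi (n : nat) (c : n.-tuple A) (k : 'I_d -> R) : R :=
  cyc_flux c + ip (cyc_index c) k.

End FiberOperator.

(* Integration over the torus T^d = R^d/(2 pi Z)^d, realised as the iterated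
   Lebesgue integral over the fundamental domain [0, 2 pi]^d. *)
Section Torus.
Variable R : realType.

Fixpoint iter_int (n : nat) (g : (nat -> R) -> R) : R :=
  match n with
  | 0 => g (fun _ => 0)
  | n'.+1 => Rintegral lebesgue_measure `[0, 2 * pi]%classic
               (fun t : R => iter_int n' (fun k => g (fun j => if j == n' then t else k j)))
  end.

Definition torus_avg (d : nat) (f : ('I_d -> R) -> R) : R :=
  (2 * pi) ^- d * iter_int d (fun k : nat -> R => f (fun j : 'I_d => k j)).

Definition torus_avgC (d : nat) (F : ('I_d -> R) -> R[i]) : R[i] :=
  (torus_avg (fun k => complex.Re (F k)) +i* torus_avg (fun k => complex.Im (F k)))%C.

End Torus.

From HB Require Import structures.
From mathcomp Require Import all_boot all_order all_algebra.
From mathcomp Require Import all_classical all_reals all_analysis.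
From mathcomp Require Import complex ring.
Import Order.TTheory GRing.Theory Num.Theory.
Import numFieldNormedType.Exports.
Local Open Scope ring_scope.

Set Implicit Arguments.
Unset Strict Implicit.
Unset Printing Implicit Defensive.

(* Expanding the diagonals of H(k) and H(k)^2 entrywise writes their traces as
   potential terms plus sums of e^{i phi(c,k)} over the cycles c of length 1
   and 2.  Replacing every edge of a cycle by its inverse preserves cycles and
   negates the phase, so the imaginary parts cancel and only cosines remain.
   The average of cos (a + <t,k>) over the torus, t in Z^d, is cos a when
   t = 0 and 0 otherwise (one coordinate at a time, by the fundamental theorem
   of calculus), which gives the averaged formulas.  Without loops there are no
   1-cycles, and without multiple edges the 2-cycles are exactly the pairs
   (e, inverse of e), each contributing cos 0 = 1. *)

Section RintegralSum.
Context d (T : measurableType d) (R : realType) (mu : {measure set T -> \bar R}).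
Local Open Scope classical_set_scope.

Lemma integrable_sumr (I : Type) (s : seq I) (P : pred I) (D : set T) (f : I -> T -> R) :
  measurable D -> (forall i, P i -> mu.-integrable D (EFin \o f i)) ->
  mu.-integrable D (EFin \o (fun x => \sum_(i <- s | P i) f i x)).
Proof.
move=> mD intf; have -> : EFin \o (fun x => \sum_(i <- s | P i) f i x) =
    fun x => \sum_(i <- s | P i) (f i x)%:E by apply: funext => x; rewrite /= sumEFin.
by apply: integrable_sum.
Qed.

Lemma Rintegral_sum (I : Type) (s : seq I) (P : pred I) (D : set T) (f : I -> T -> R) :
  measurable D -> (forall i, P i -> mu.-integrable D (EFin \o f i)) ->
  \int[mu]_(x in D) \sum_(i <- s | P i) f i x = \sum_(i <- s | P i) \int[mu]_(x in D) f i x.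
Proof.
move=> mD intf; elim: s => [|i s IHs].
  by under eq_fun do rewrite big_nil; rewrite big_nil Rintegral_cst // mul0r.
rewrite big_cons -IHs; under eq_fun do rewrite big_cons.
case: ifP => Pi //; rewrite RintegralD //; first exact: intf.
exact: integrable_sumr.
Qed.

End RintegralSum.

Section TrigIntegral.
Variable R : realType.
Local Notation mu := (@lebesgue_measure R).
Local Open Scope classical_set_scope.

Lemma sin_addrzM2pi (a : R) (m : int) : sin (a + m%:~R * (2 * pi)) = sin a.
Proof.
have sin_addrnM2pi (b : R) n : sin (b + n%:R * (2 * pi)) = sin b.
  by rewrite !mulr_natl periodicn //; exact: sinD2pi.
case: m => n; first exact: sin_addrnM2pi.
by rewrite NegzE mulrNz mulNr -[in RHS](subrK (n.+1%:R * (2 * pi)) a) sin_addrnM2pi.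
Qed.

Lemma Rintegral_cst_02pi (b : R) : \int[mu]_(t in `[0, 2 * pi]) b = 2 * pi * b.
Proof.
have mu02 : fine (mu `[0, 2 * pi]) = 2 * pi.
  by rewrite lebesgue_measure_itv /= lte_fin mulr_gt0 ?pi_gt0 //= subr0.
by rewrite Rintegral_cst // mu02 mulrC.
Qed.

Lemma continuous_integrable_02pi (f : R -> R) :
  continuous f -> mu.-integrable `[0, 2 * pi] (EFin \o f).
Proof.
move=> cf; apply: continuous_compact_integrable; first exact: segment_compact.
exact: continuous_subspaceT.
Qed.

Lemma continuous_cos_lin (a c : R) : continuous (fun t : R => cos (a + c * t)).
Proof.
move=> t; apply: continuous_comp; last exact: continuous_cos.
apply: continuousD; first exact: cst_continuous.
by apply: continuousM; [exact: cst_continuous | exact: cvg_id].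
Qed.

Lemma is_derive_lin (a c x : R) : is_derive x 1 (fun t : R => a + c * t) c.
Proof.
have : is_derive x 1 (cst a + c *: @id R) (0 + c *: 1) by exact: is_deriveD.
by rewrite add0r /GRing.scale /= mulr1.
Qed.

Lemma Rintegral_cos_lin (a : R) (m : int) :
  \int[mu]_(t in `[0, 2 * pi]) cos (a + m%:~R * t) =
  if m == 0 then 2 * pi * cos a else 0.
Proof.
have [->|m0] := eqVneq m 0.
  rewrite -Rintegral_cst_02pi; congr Rintegral.
  by apply: funext => t; rewrite mul0r addr0.
have mR : m%:~R != 0 :> R by rewrite intr_eq0.
pose F t := (m%:~R)^-1 * sin (a + m%:~R * t).
have dF (x : R) : is_derive x 1 F (cos (a + m%:~R * x)).
  have := is_deriveZ (m%:~R)^-1 (is_derive1_comp (is_derive_sin _) (is_derive_lin a m%:~R x)).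
  by rewrite /GRing.scale /= mulrCA mulVf // mulr1.
have cF : continuous F.
  by move=> x; apply/differentiable_continuous/derivable1_diffP; case: (dF x).
rewrite /Rintegral (@continuous_FTC2 _ _ F) ?mulr_gt0 ?pi_gt0 //.
- by rewrite /F /= mulr0 addr0 sin_addrzM2pi subrr.
- exact/continuous_subspaceT/continuous_cos_lin.
- split; first by move=> x _; case: (dF x).
  + by apply: cvg_at_right_filter; apply: cF.
  + by apply: cvg_at_left_filter; apply: cF.
- by move=> x _; rewrite derive1E (@derive_val _ _ _ _ _ _ _ (dF x)).
Qed.

Lemma Rintegral_cos_sum (X : Type) (s : seq X) (P : pred X) (b : R) (w a : X -> R)
    (m : X -> int) :
  \int[mu]_(t in `[0, 2 * pi]) (b + \sum_(x <- s | P x) w x * cos (a x + (m x)%:~R * t)) =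
  2 * pi * (b + \sum_(x <- s | P x && (m x == 0)) w x * cos (a x)).
Proof.
have int_term x :
    mu.-integrable `[0, 2 * pi] (EFin \o (fun t => w x * cos (a x + (m x)%:~R * t))).
  apply: continuous_integrable_02pi => t; apply: continuousM; first exact: cst_continuous.
  exact: continuous_cos_lin.
rewrite RintegralD //;
  [|exact/continuous_integrable_02pi/cst_continuous|exact: integrable_sumr].
rewrite Rintegral_cst_02pi Rintegral_sum // big_mkcondr (mulrDr (2 * pi)) mulr_sumr.
congr (_ + _); apply: eq_bigr => x _.
rewrite RintegralZl //; last exact/continuous_integrable_02pi/continuous_cos_lin.
by rewrite Rintegral_cos_lin; case: eqP => _; rewrite ?mulr0 // mulrCA.
Qed.

End TrigIntegral.

Lemma forall_ordSr (n : nat) (p : pred nat) :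
  [forall j : 'I_n.+1, p j] = [forall j : 'I_n, p j] && p n.
Proof.
apply/forallP/andP => [pj|[/forallP pj pn] j].
  by split; [apply/forallP => j; exact: (pj (widen_ord (leqnSn n) j)) | exact: (pj ord_max)].
have [jn|] := ltnP j n; first exact: (pj (Ordinal jn)).
move=> nj; suff -> : nat_of_ord j = n by [].
by apply/eqP; rewrite eqn_leq nj -ltnS ltn_ord.
Qed.

Section TorusAverage.
Variable R : realType.

Lemma iter_int_cos_sum (n : nat) (X : Type) (s : seq X) (P : pred X) (b : R)
    (w a : X -> R) (c : X -> nat -> int) :
  iter_int n (fun k =>
    b + \sum_(x <- s | P x) w x * cos (a x + \sum_(j < n) (c x j)%:~R * k j)) =
  (2 * pi) ^+ n * (b + \sum_(x <- s | P x && [forall j : 'I_n, c x j == 0]) w x * cos (a x)).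
Proof.
elim: n P w a b => [|n IHn] P w a b /=.
  rewrite expr0 mul1r; congr (_ + _); apply: eq_big => [x|x _]; last by rewrite big_ord0 addr0.
  by rewrite (_ : [forall j : 'I_0, _] = true) ?andbT //; apply/forallP => -[].
pose P' x := P x && [forall j : 'I_n, c x j == 0].
have inner t : iter_int n (fun k => b + \sum_(x <- s | P x) w x *
      cos (a x + \sum_(j < n.+1) (c x j)%:~R * (if j == n :> nat then t else k j))) =
    (2 * pi) ^+ n * b +
    \sum_(x <- s | P' x) ((2 * pi) ^+ n * w x) * cos (a x + (c x n)%:~R * t).
  transitivity (iter_int n (fun k => b + \sum_(x <- s | P x) w x *
      cos ((a x + (c x n)%:~R * t) + \sum_(j < n) (c x j)%:~R * k j))).
    congr iter_int; apply: funext => k; congr (_ + _); apply: eq_bigr => x _.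
    rewrite big_ord_recr /= eqxx addrAC addrA; congr (_ * cos (_ + _ + _)).
    by apply: eq_bigr => j _; rewrite ltn_eqF.
  by rewrite IHn mulrDr mulr_sumr; under eq_bigr do rewrite mulrA.
under eq_Rintegral => t _ do rewrite inner.
rewrite Rintegral_cos_sum (mulrDr (2 * pi)) (mulrDr ((2 * pi) ^+ n.+1)) !mulr_sumr exprS.
congr (_ + _); first by rewrite mulrA.
apply: eq_big => [x|x _]; first by rewrite /P' (forall_ordSr n (fun j => c x j == 0)) andbA.
by rewrite !mulrA.
Qed.

Lemma torus_avg_cos_sum (d : nat) (X : Type) (s : seq X) (P : pred X) (b : R)
    (w a : X -> R) (t : X -> 'I_d -> int) :
  torus_avg (fun k => b + \sum_(x <- s | P x) w x * cos (a x + ip (t x) k)) =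
  b + \sum_(x <- s | P x && [forall j, t x j == 0]) w x * cos (a x).
Proof.
(* [iter_int] integrates functions of [k : nat -> R]: extend the frequencies by 0. *)
pose c x (j : nat) : int := if insub j is Some j' then t x j' else 0.
have cE x (j : 'I_d) : c x j = t x j by rewrite /c valK.
rewrite /torus_avg.
have -> : (fun k : nat -> R =>
      b + \sum_(x <- s | P x) w x * cos (a x + ip (t x) (fun j : 'I_d => k j))) =
    (fun k => b + \sum_(x <- s | P x) w x * cos (a x + \sum_(j < d) (c x j)%:~R * k j)).
  apply: funext => k; congr (_ + _); apply: eq_bigr => x _.
  by congr (_ * cos (_ + _)); apply: eq_bigr => j _; rewrite cE.
have pi2d_neq0 : (2 * pi) ^+ d != 0 :> R.
  by rewrite expf_neq0 // mulf_neq0 // gt_eqF // pi_gt0.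
rewrite iter_int_cos_sum mulKf //; congr (_ + _); apply: eq_bigl => x.
by congr (_ && _); apply: eq_forallb => j; rewrite cE.
Qed.

Lemma torus_avg_cst (d : nat) (b : R) : torus_avg (fun _ : 'I_d -> R => b) = b.
Proof.
transitivity (torus_avg (fun k : 'I_d -> R =>
    b + \sum_(x <- [::] : seq unit) 0 * cos (0 + ip (fun=> 0) k))).
  by apply: f_equal; apply: funext => k; rewrite big_nil addr0.
by rewrite torus_avg_cos_sum big_nil addr0.
Qed.

Lemma torus_avg_cos_sum2 (d : nat) (T1 T2 : finType) (P1 : pred T1) (P2 : pred T2) (b : R)
    (w1 a1 : T1 -> R) (t1 : T1 -> 'I_d -> int) (w2 a2 : T2 -> R) (t2 : T2 -> 'I_d -> int) :
  torus_avg (fun k => b + \sum_(c | P1 c) w1 c * cos (a1 c + ip (t1 c) k)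
                        + \sum_(c | P2 c) w2 c * cos (a2 c + ip (t2 c) k)) =
  b + \sum_(c | P1 c && [forall j, t1 c j == 0]) w1 c * cos (a1 c)
    + \sum_(c | P2 c && [forall j, t2 c j == 0]) w2 c * cos (a2 c).
Proof.
pose sel U (f1 : T1 -> U) (f2 : T2 -> U) (z : T1 + T2) :=
  match z with inl c => f1 c | inr c => f2 c end.
have := @torus_avg_cos_sum d _ (index_enum _) (sel _ P1 P2) b
  (sel _ w1 w2) (sel _ a1 a2) (sel _ t1 t2).
rewrite big_sumType /= addrA => <-.
by apply: f_equal; apply: funext => k; rewrite big_sumType addrA.
Qed.

Lemma torus_avgC_real (d : nat) (F : ('I_d -> R) -> R[i]) (f : ('I_d -> R) -> R) :
  (forall k, F k = (f k)%:C%C) -> torus_avgC F = (torus_avg f)%:C%C.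
Proof.
move=> Ff; rewrite /torus_avgC.
have -> : (fun k => complex.Re (F k)) = f by apply: funext => k; rewrite Ff.
have -> : (fun k => complex.Im (F k)) = (fun=> 0) by apply: funext => k; rewrite Ff.
by rewrite torus_avg_cst.
Qed.

End TorusAverage.

Lemma sum_odd_involution (R : numDomainType) (I : finType) (P : pred I) (sg : I -> I)
    (f : I -> R) :
  involutive sg -> (forall i, P (sg i) = P i) -> (forall i, P i -> f (sg i) = - f i) ->
  \sum_(i | P i) f i = 0.
Proof.
move=> sgK Psg fsg; set S := \sum_(i | P i) f i.
have SN : S = - S.
  rewrite {1}/S (reindex_inj (can_inj sgK)) /= -sumrN.
  by apply: eq_big => [i|i]; rewrite Psg // => /fsg.
have : S *+ 2 == 0 by rewrite mulr2n {2}SN subrr.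
by rewrite mulrn_eq0 => /eqP.
Qed.

Lemma sum_fibers (I J : finType) (V : nmodType) (g : I -> J) (Q : I -> J -> bool)
    (F : I -> J -> V) :
  \sum_j \sum_(i | Q i j && (g i == j)) F i j = \sum_(i | Q i (g i)) F i (g i).
Proof.
rewrite (exchange_big_dep predT) //= [RHS]big_mkcond; apply: eq_bigr => i _.
rewrite (eq_bigl (fun j => (j == g i) && Q i j)) => [|j]; last by rewrite andbC eq_sym.
by rewrite big_mkcondr big_pred1_eq.
Qed.

Section Expi.
Variable R : realType.

Lemma expiE (t : R) : expi t = (cos t)%:C%C + 'i%C * (sin t)%:C%C.
Proof. by rewrite /expi; simpc. Qed.

Lemma expiD (a b : R) : expi a * expi b = expi (a + b).
Proof. by rewrite /expi cosD sinD; simpc; congr (Complex _ _); ring. Qed.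

Lemma sum_expi_real (I : finType) (P : pred I) (sg : I -> I) (u t : I -> R) :
  involutive sg -> (forall i, P (sg i) = P i) -> (forall i, P i -> u (sg i) = u i) ->
  (forall i, t (sg i) = - t i) ->
  \sum_(i | P i) (u i)%:C%C * expi (t i) = (\sum_(i | P i) u i * cos (t i))%:C%C.
Proof.
move=> sgK Psg usg tsg.
have sin_sum0 : \sum_(i | P i) u i * sin (t i) = 0.
  by apply: (sum_odd_involution sgK Psg) => i Pi; rewrite usg // tsg sinN mulrN.
under eq_bigr do rewrite expiE mulrDr mulrCA -!rmorphM.
by rewrite big_split /= -mulr_sumr -!rmorph_sum sin_sum0 mulr0 addr0.
Qed.

End Expi.

Definition edge_phase (R : realType) (d : nat) (A : finType) (tau : A -> 'I_d -> int)
    (alpha : A -> R) (e : A) (k : 'I_d -> R) : R :=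
  alpha e + ip (tau e) k.

Section ShortCycles.
Variables (R : realType) (d nu : nat) (A : finType).
Variables (src tgt : A -> 'I_nu) (tau : A -> 'I_d -> int) (alpha : A -> R).

Lemma sum_tuple1 (V : nmodType) (P : pred (1.-tuple A)) (F : 1.-tuple A -> V) :
  \sum_(c | P c) F c = \sum_(e | P [tuple e]) F [tuple e].
Proof.
rewrite (reindex (fun e : A => [tuple e])) //; exists (fun c => thead c) => [e _|c _] //.
by apply: val_inj; case: c => [[|x []]].
Qed.

Lemma sum_tuple2 (V : nmodType) (P : pred (2.-tuple A)) (F : 2.-tuple A -> V) :
  \sum_(c | P c) F c = \sum_(p : A * A | P [tuple p.1; p.2]) F [tuple p.1; p.2].
Proof.
rewrite (reindex (fun p : A * A => [tuple p.1; p.2])) //.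
exists (fun c => (tnth c ord0, tnth c (lift ord0 ord0))) => [[e f] _|c _] //.
by apply: val_inj; case: c => [[|x [|y []]]].
Qed.

Lemma is_cycle_tuple1 e : is_cycle src tgt [tuple e] = (src e == tgt e).
Proof.
rewrite [in RHS]eq_sym; apply/forallP/idP => [/(_ ord0) //|loop_e i].
by rewrite !(tnth_nth e) /= !ord1.
Qed.

Lemma is_cycle_tuple2 e f :
  is_cycle src tgt [tuple e; f] = (src f == tgt e) && (tgt f == src e).
Proof.
rewrite [src f == _]eq_sym; apply/forallP/andP => [cyc|[ef fe] i].
  by split; [exact: (cyc ord0) | exact: (cyc (lift ord0 ord0))].
by case: i => [[|[|//]] ?]; rewrite !(tnth_nth e).
Qed.

Lemma phi_tuple1 e k : phi tau alpha [tuple e] k = edge_phase tau alpha e k.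
Proof. by rewrite /phi /cyc_flux /cyc_index /ip big_ord1; under eq_bigr do rewrite big_ord1. Qed.

Lemma phi_tuple2 e f k :
  phi tau alpha [tuple e; f] k = edge_phase tau alpha e k + edge_phase tau alpha f k.
Proof.
rewrite /phi /cyc_flux /cyc_index /edge_phase /ip big_ord_recr big_ord1 /=.
under eq_bigr do rewrite big_ord_recr big_ord1 /= intrD mulrDl.
by rewrite big_split /=; ring.
Qed.

Lemma sum_cycles1_noloop :
  (forall e, src e <> tgt e) ->
  forall (V : nmodType) (P : pred (1.-tuple A)) (F : 1.-tuple A -> V),
  (forall c, P c -> is_cycle src tgt c) -> \sum_(c | P c) F c = 0.
Proof.
move=> noloop V P F Pcyc; rewrite big_pred0 // => c; apply/negbTE/negP => /Pcyc.
by move=> /forallP/(_ ord0)/eqP; rewrite [ordS _]ord1 => /esym; apply: noloop.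
Qed.

End ShortCycles.

Section FiberTraces.
Variables (R : realType) (d nu : nat) (A : finType).
Variables (src tgt : A -> 'I_nu) (inv : A -> A) (tau : A -> 'I_d -> int)
  (alpha : A -> R) (Vp : 'I_nu -> R).
Hypotheses (inv_invol : involutive inv)
  (src_inv : forall e, src (inv e) = tgt e)
  (tgt_inv : forall e, tgt (inv e) = src e)
  (tau_inv : forall e, tau (inv e) = (fun j => - tau e j))
  (alpha_inv : forall e, alpha (inv e) = - alpha e).

Local Notation th := (edge_phase tau alpha).
Local Notation v := (vpot src Vp).
Local Notation H := (Hmat src tgt tau alpha Vp).
Local Notation Am := (Amat src tgt tau alpha).

Lemma edge_phase_inv e k : th (inv e) k = - th e k.
Proof.
rewrite /edge_phase alpha_inv tau_inv /ip opprD -sumrN; congr (_ + _).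
by apply: eq_bigr => j _; rewrite mulrNz mulNr.
Qed.

Lemma Hmat_entry k x y : H k x y = Am k x y + (x == y)%:R * (v x)%:C%C.
Proof. by rewrite !mxE /vpot rmorphB /=; ring. Qed.

Lemma sum_Amat_diag k (u : 'I_nu -> R) :
  \sum_x (u x)%:C%C * Am k x x = (\sum_(e | src e == tgt e) u (src e) * cos (th e k))%:C%C.
Proof.
transitivity (\sum_x \sum_(e | (src e == x) && (tgt e == x))
    (u (src e))%:C%C * expi (th e k)).
  by apply: eq_bigr => x _; rewrite mxE mulr_sumr; apply: eq_bigr => e /andP[/eqP -> _].
rewrite (sum_fibers tgt (fun e x => src e == x)).
apply: sum_expi_real => // [e|e /eqP loop_e|e]; last exact: edge_phase_inv.
  by rewrite src_inv tgt_inv eq_sym.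
by rewrite src_inv loop_e.
Qed.

Lemma sum_Amat_sqr k :
  \sum_x \sum_y Am k x y * Am k y x =
  (\sum_(p : A * A | (src p.2 == tgt p.1) && (tgt p.2 == src p.1))
     cos (th p.1 k + th p.2 k))%:C%C.
Proof.
transitivity (\sum_x \sum_y \sum_(e | (src e == x) && (tgt e == y))
    \sum_(f | (src f == y) && (tgt f == x)) expi (th e k + th f k)).
  apply: eq_bigr => x _; apply: eq_bigr => y _; rewrite !mxE mulr_suml.
  by apply: eq_bigr => e _; rewrite mulr_sumr; under eq_bigr do rewrite expiD.
transitivity (\sum_x \sum_(e | src e == x)
    \sum_(f | (src f == tgt e) && (tgt f == x)) expi (th e k + th f k)).
  by apply: eq_bigr => x _; rewrite (sum_fibers tgt (fun e _ => src e == x)).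
rewrite (sum_fibers src (fun _ _ => true)) pair_big_dep /=.
under eq_bigr do rewrite -[expi _]mul1r.
rewrite (sum_expi_real (sg := fun p => (inv p.1, inv p.2))) => [|[e f]|[e f]|//|[e f]] /=.
- by under eq_bigr do rewrite mul1r.
- by rewrite !inv_invol.
- by rewrite !src_inv !tgt_inv andbC.
- by rewrite !edge_phase_inv -opprD.
Qed.

Lemma trace_Hmat_edges k :
  \tr (H k) = (\sum_x v x + \sum_(e | src e == tgt e) cos (th e k))%:C%C.
Proof.
rewrite /mxtrace; under eq_bigr do rewrite Hmat_entry eqxx mul1r.
rewrite big_split /= addrC rmorphD rmorph_sum; congr (_ + _).
transitivity (\sum_x (1 : R)%:C%C * Am k x x).
  by apply: eq_bigr => x _; rewrite rmorph1 mul1r.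
by rewrite sum_Amat_diag /=; under eq_bigr do rewrite mul1r.
Qed.

Lemma Hmat_sqr_diag k x :
  \sum_y H k x y * H k y x =
  \sum_y Am k x y * Am k y x + 2 * (v x)%:C%C * Am k x x + (v x ^+ 2)%:C%C.
Proof.
rewrite (bigD1 x) //= [in RHS](bigD1 x) //= !Hmat_entry eqxx mul1r.
have -> : \sum_(y | y != x) H k x y * H k y x = \sum_(y | y != x) Am k x y * Am k y x.
  apply: eq_bigr => y yx.
  by rewrite !Hmat_entry (negbTE yx) eq_sym (negbTE yx) !mul0r !addr0.
rewrite rmorphXn /=; ring.
Qed.

Lemma trace_Hmat_sqr_edges k :
  \tr (H k *m H k) =
  (\sum_x v x ^+ 2 + 2 * \sum_(e | src e == tgt e) v (src e) * cos (th e k)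
   + \sum_(p : A * A | (src p.2 == tgt p.1) && (tgt p.2 == src p.1))
       cos (th p.1 k + th p.2 k))%:C%C.
Proof.
rewrite /mxtrace; under eq_bigr do rewrite mxE Hmat_sqr_diag.
rewrite !big_split /= sum_Amat_sqr.
under [X in _ + X + _]eq_bigr do rewrite -mulrA.
rewrite -mulr_sumr sum_Amat_diag -rmorph_sum !rmorphD rmorphM rmorph_nat /=.
ring.
Qed.

Lemma trace_Hmat k :
  \tr (H k) =
  (\sum_x v x + \sum_(c : 1.-tuple A | is_cycle src tgt c) cos (phi tau alpha c k))%:C%C.
Proof.
rewrite trace_Hmat_edges sum_tuple1.
by congr ((_ + _)%:C%C); apply: eq_big => [e|e _]; rewrite ?is_cycle_tuple1 ?phi_tuple1.
Qed.

Lemma trace_Hmat_sqr k :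
  \tr (H k *m H k) =
  (\sum_x v x ^+ 2
   + 2 * \sum_(c : 1.-tuple A | is_cycle src tgt c)
           v (src (tnth c ord0)) * cos (phi tau alpha c k)
   + \sum_(c : 2.-tuple A | is_cycle src tgt c) cos (phi tau alpha c k))%:C%C.
Proof.
rewrite trace_Hmat_sqr_edges sum_tuple1 sum_tuple2.
congr ((_ + 2 * _ + _)%:C%C).
  by apply: eq_big => [e|e _]; rewrite ?is_cycle_tuple1 ?phi_tuple1.
by apply: eq_big => [[e f]|[e f] _]; rewrite ?is_cycle_tuple2 ?phi_tuple2.
Qed.

Lemma avg_trace_Hmat :
  torus_avgC (fun k => \tr (H k)) =
  (\sum_x v x + \sum_(c : 1.-tuple A | is_cycle0 src tgt tau c) cos (cyc_flux alpha c))%:C%C.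
Proof.
rewrite (torus_avgC_real trace_Hmat); congr (_%:C%C).
transitivity (torus_avg (fun k => \sum_x v x + \sum_(c : 1.-tuple A | is_cycle src tgt c)
    1 * cos (cyc_flux alpha c + ip (cyc_index tau c) k))).
  apply: f_equal; apply: funext => k.
  by congr (_ + _); apply: eq_bigr => c _; rewrite mul1r.
by rewrite torus_avg_cos_sum; congr (_ + _); apply: eq_bigr => c _; rewrite mul1r.
Qed.

Lemma avg_trace_Hmat_sqr :
  torus_avgC (fun k => \tr (H k *m H k)) =
  (\sum_x v x ^+ 2
   + 2 * \sum_(c : 1.-tuple A | is_cycle0 src tgt tau c)
           v (src (tnth c ord0)) * cos (cyc_flux alpha c)
   + \sum_(c : 2.-tuple A | is_cycle0 src tgt tau c) cos (cyc_flux alpha c))%:C%C.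
Proof.
rewrite (torus_avgC_real trace_Hmat_sqr); congr (_%:C%C).
transitivity (torus_avg (fun k => \sum_x v x ^+ 2
  + \sum_(c : 1.-tuple A | is_cycle src tgt c)
      (2 * v (src (tnth c ord0))) * cos (cyc_flux alpha c + ip (cyc_index tau c) k)
  + \sum_(c : 2.-tuple A | is_cycle src tgt c)
      1 * cos (cyc_flux alpha c + ip (cyc_index tau c) k))).
  apply: f_equal; apply: funext => k; rewrite mulr_sumr.
  by congr (_ + _ + _); apply: eq_bigr => c _; rewrite ?mulrA ?mul1r.
rewrite torus_avg_cos_sum2 mulr_sumr.
by congr (_ + _ + _); apply: eq_bigr => c _; rewrite ?mulrA ?mul1r.
Qed.

Lemma sum_cycles2_simple k :
  (forall e f, src e = src f -> tgt e = tgt f -> e = f) ->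
  \sum_(c : 2.-tuple A | is_cycle src tgt c) cos (phi tau alpha c k) = #|A|%:R.
Proof.
move=> simple; rewrite sum_tuple2.
rewrite (eq_bigl (fun p : A * A => p.2 == inv p.1)) => [|[e f] /=]; last first.
  rewrite is_cycle_tuple2; apply/andP/eqP => [[/eqP sf /eqP tf]|->].
    by apply: simple; rewrite ?src_inv ?tgt_inv.
  by rewrite src_inv tgt_inv !eqxx.
rewrite -(pair_big_dep xpredT (fun e f => f == inv e)
  (fun e f => cos (phi tau alpha [tuple e; f] k))) /=.
under eq_bigr do rewrite big_pred1_eq phi_tuple2 edge_phase_inv addrN cos0.
by rewrite sumr_const.
Qed.

End FiberTraces.

Theorem proposition3p5 (R : realType) (d nu : nat) (A : finType)
  (src tgt : A -> 'I_nu) (inv : A -> A) (tau : A -> 'I_d -> int)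
  (alpha : A -> R) (Vp : 'I_nu -> R)
  (inv_invol : forall e, inv (inv e) = e)
  (inv_neq : forall e, inv e <> e)
  (src_inv : forall e, src (inv e) = tgt e)
  (tgt_inv : forall e, tgt (inv e) = src e)
  (tau_inv : forall e, tau (inv e) = (fun j => - tau e j))
  (alpha_inv : forall e, alpha (inv e) = - alpha e) :
  let H := Hmat src tgt tau alpha Vp in
  let v := vpot src Vp in
  let ph n (c : n.-tuple A) k := phi tau alpha c k in
  let fl n (c : n.-tuple A) := cyc_flux alpha c in
  (forall k : 'I_d -> R,
     \tr (H k) =
       (\sum_(x < nu) v x
        + \sum_(c : 1.-tuple A | is_cycle src tgt c) cos (ph 1 c k))%:C%C)
  /\ (forall k : 'I_d -> R,
     \tr (H k *m H k) =
       (\sum_(x < nu) v x ^+ 2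
        + 2 * \sum_(c : 1.-tuple A | is_cycle src tgt c)
                 v (src (tnth c ord0)) * cos (ph 1 c k)
        + \sum_(c : 2.-tuple A | is_cycle src tgt c) cos (ph 2 c k))%:C%C)
  /\ torus_avgC (fun k => \tr (H k)) =
       (\sum_(x < nu) v x
        + \sum_(c : 1.-tuple A | is_cycle0 src tgt tau c) cos (fl 1 c))%:C%C
  /\ torus_avgC (fun k => \tr (H k *m H k)) =
       (\sum_(x < nu) v x ^+ 2
        + 2 * \sum_(c : 1.-tuple A | is_cycle0 src tgt tau c)
                 v (src (tnth c ord0)) * cos (fl 1 c)
        + \sum_(c : 2.-tuple A | is_cycle0 src tgt tau c) cos (fl 2 c))%:C%C
  /\ ((forall e : A, src e <> tgt e) ->
        (forall k : 'I_d -> R, \tr (H k) = (\sum_(x < nu) v x)%:C%C)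
        /\ torus_avgC (fun k => \tr (H k)) = (\sum_(x < nu) v x)%:C%C)
  /\ ((forall e : A, src e <> tgt e) ->
      (forall e f : A, src e = src f -> tgt e = tgt f -> e = f) ->
        (forall k : 'I_d -> R,
           \tr (H k *m H k) = (#|A|%:R + \sum_(x < nu) v x ^+ 2)%:C%C)
        /\ torus_avgC (fun k => \tr (H k *m H k))
             = (#|A|%:R + \sum_(x < nu) v x ^+ 2)%:C%C).
Proof.
move=> H v ph fl.
have tr1 k := trace_Hmat Vp inv_invol src_inv tgt_inv tau_inv alpha_inv k.
have tr2 k := trace_Hmat_sqr Vp inv_invol src_inv tgt_inv tau_inv alpha_inv k.
have avg1 := avg_trace_Hmat Vp inv_invol src_inv tgt_inv tau_inv alpha_inv.
have avg2 := avg_trace_Hmat_sqr Vp inv_invol src_inv tgt_inv tau_inv alpha_inv.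
do 4!split => //.
split=> [noloop|noloop simple].
  split=> [k|]; first by rewrite tr1 (sum_cycles1_noloop noloop) ?addr0.
  by rewrite avg1 (sum_cycles1_noloop noloop) ?addr0 // => c /andP[].
have tr2_simple k : \tr (H k *m H k) = (#|A|%:R + \sum_(x < nu) v x ^+ 2)%:C%C.
  rewrite tr2 (sum_cycles2_simple src_inv tgt_inv tau_inv alpha_inv) //.
  by rewrite (sum_cycles1_noloop noloop) // mulr0 addr0 addrC.
split=> //; rewrite (torus_avgC_real tr2_simple); congr (_%:C%C); exact: torus_avg_cst.
Qed.
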